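(* For every $n\ge2$, every $K_n$-treelike graph is $\mathcal{C}$-$\mathrm{HH}$.
   Context: Graphs are simple; subgraphs are induced. A homomorphism maps edges to edges. A graph $G$ is $\mathcal{C}$-$\mathrm{HH}$ if every homomorphism from a finite connected induced subgraph of $G$ into $G$ extends to a homomorphism $G\to G$. For $n\ge2$, a $K_n$-treelike graph is a finite connected graph whose vertex set is covered by a family of $n$-element vertex sets (components), each inducing $K_n$, such that every edge lies inside some component, two distinct components share at most one vertex, and every induced cycle has all its vertices inside a single component. *)

From mathcomp Require Import all_boot.
Set Implicit Arguments. Unset Strict Implicit. Unset Printing Implicit Defensive.

Definition simple_graph (T : finType) (e : rel T) : Prop :=
  symmetric e /\ irreflexive e.

Definition induced_rel (T : finType) (e : rel T) (A : {set T}) : rel T :=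
  [rel x y | [&& x \in A, y \in A & e x y]].

Definition induced_connected (T : finType) (e : rel T) (A : {set T}) : Prop :=
  A != set0 /\
  forall x y, x \in A -> y \in A -> connect (induced_rel e A) x y.

Definition graph_connected (T : finType) (e : rel T) : Prop :=
  induced_connected e [set: T].

Definition hom_on (T : finType) (e : rel T) (A : {set T}) (f : T -> T) : Prop :=
  forall x y, x \in A -> y \in A -> e x y -> e (f x) (f y).

Definition graph_hom (T : finType) (e : rel T) (f : T -> T) : Prop :=
  forall x y, e x y -> e (f x) (f y).

Definition C_HH (T : finType) (e : rel T) : Prop :=
  forall (A : {set T}) (f : T -> T),
    induced_connected e A -> hom_on e A f ->
    exists g : T -> T, graph_hom e g /\ {in A, forall x, g x = f x}.

Definition clique (T : finType) (e : rel T) (A : {set T}) : Prop :=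
  forall x y, x \in A -> y \in A -> x != y -> e x y.

(* C is the vertex set of an induced cycle: the induced subgraph G[C] is a
   cycle graph, i.e. it has at least 3 vertices, is connected and
   2-regular. *)
Definition induced_cycle (T : finType) (e : rel T) (C : {set T}) : Prop :=
  3 <= #|C| /\ induced_connected e C /\
  forall x, x \in C -> #|[set y in C | e x y]| = 2.

(* K_n-treelike graph, with F the family of components. *)
Definition Kn_treelike (n : nat) (T : finType) (e : rel T) : Prop :=
  simple_graph e /\ graph_connected e /\
  exists F : {set {set T}},
    (forall x : T, exists2 K, K \in F & x \in K) /\
    (forall K, K \in F -> #|K| = n /\ clique e K) /\
    (forall x y, e x y -> exists2 K, K \in F & (x \in K) && (y \in K)) /\
    (forall K1 K2, K1 \in F -> K2 \in F -> K1 != K2 -> #|K1 :&: K2| <= 1) /\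
    (forall C, induced_cycle e C -> exists2 K, K \in F & C \subset K).

From mathcomp Require Import all_boot zify.
Set Implicit Arguments. Unset Strict Implicit. Unset Printing Implicit Defensive.

(* Extend the homomorphism one vertex at a time, keeping its domain B connected.
   A K_n-treelike graph is a block graph, i.e. chordal and diamond-free, so the
   neighbours in B of a vertex v outside B form a clique: a shortest path in B
   between two non-adjacent neighbours would, together with v, give either a
   diamond or an induced cycle longer than a triangle.  With v this clique lies
   in one component, hence has fewer than n vertices; its image is a clique in
   some component of size n, and any vertex of that component outside the
   image can be taken as the image of v. *)

Definition chordal (T : finType) (e : rel T) : Prop :=
  forall C, induced_cycle e C -> clique e C.

Definition diamond_free (T : finType) (e : rel T) : Prop :=
  forall a b c d, e a b -> e a c -> e b c -> e a d -> e b d -> c != d -> e c d.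

Section Cycles.
Variables (T : finType) (e : rel T).
Hypotheses (e_sym : symmetric e) (e_irr : irreflexive e).

Lemma induced_cycle_image (c : nat -> T) (m : nat) :
  3 <= m ->
  (forall i j, i < m -> j < m -> c i = c j -> i = j) ->
  (forall i, i.+1 < m -> e (c i) (c i.+1)) ->
  e (c m.-1) (c 0) ->
  (forall i j, i < m -> j < m -> e (c i) (c j) ->
     j = i.+1 \/ i = j.+1 \/ (i = 0 /\ j = m.-1) \/ (j = 0 /\ i = m.-1)) ->
  induced_cycle e [set c (nat_of_ord i) | i : 'I_m].
Proof.
move=> m3 c_inj c_next c_last c_adj.
set C := [set c (nat_of_ord i) | i : 'I_m].
have inC i : i < m -> c i \in C by move=> im; apply/imsetP; exists (Ordinal im).
have CP x : x \in C -> exists2 i, i < m & x = c i by case/imsetP=> i _ ->; exists i.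
split; first by rewrite card_imset ?card_ord // => i j /c_inj h; apply/val_inj/h.
split.
  split; first by apply/set0Pn; exists (c 0); apply: inC; lia.
  have fwd i j : i <= j -> j < m -> connect (induced_rel e C) (c i) (c j).
    elim: j => [|j IH] ij jm; first by have -> : i = 0 by lia.
    case: (ltnP i j.+1) => h; last by have -> : i = j.+1 by lia.
    apply: (connect_trans (IH _ _)); try lia.
    by apply: connect1; rewrite /induced_rel /= !inC ?c_next //; lia.
  move=> x y /CP [i im ->] /CP [j jm ->].
  apply: (connect_trans (fwd i m.-1 _ _)); try lia.
  apply: (connect_trans (y := c 0)); last by apply: fwd; lia.
  by apply: connect1; rewrite /induced_rel /= !inC ?c_last //; lia.
move=> x /CP [i im ->].
set s := if i.+1 == m then 0 else i.+1.
set p := if i == 0 then m.-1 else i.-1.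
have sm : s < m by rewrite /s; case: ifP => /eqP; lia.
have pm : p < m by rewrite /p; case: ifP => /eqP; lia.
have -> : [set y in C | e (c i) y] = [set c s; c p].
  apply/setP => y; rewrite !inE; apply/andP/orP.
    case=> /CP [j jm ->] /(c_adj _ _ im jm) H.
    have : j = s \/ j = p by rewrite /s /p; do 2 case: ifP => /eqP; lia.
    by case=> ->; [left|right].
  case=> /eqP ->; (split; first by apply: inC).
    rewrite /s; case: ifP => /eqP h; last by apply: c_next; lia.
    by have -> : i = m.-1 by lia.
  rewrite /p e_sym; case: ifP => /eqP h; first by rewrite h.
  have -> : i = i.-1.+1 by lia.
  by apply: c_next; lia.
rewrite cards2; suff -> : c s != c p by [].
apply/eqP => /(c_inj _ _ sm pm).
by rewrite /s /p; do 2 case: ifP => /eqP; lia.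
Qed.

Lemma triangle_induced_cycle x y z :
  e x y -> e y z -> e x z ->
  exists2 C, induced_cycle e C & [/\ x \in C, y \in C & z \in C].
Proof.
move=> exy eyz exz.
have neq a b : e a b -> a != b by move=> eab; apply: contraTneq eab => ->; rewrite e_irr.
pose c i := nth x [:: x; y; z] i.
exists [set c (nat_of_ord i) | i : 'I_3]; last first.
  by split; apply/imsetP; [exists ord0 | exists (inord 1) | exists (inord 2)];
     rewrite //= inordK.
apply: induced_cycle_image => //=; last 2 first.
- by rewrite e_sym.
- move=> i j i3 j3; case: (eqVneq i j) => [-> | ij]; [by rewrite e_irr | lia].
- move: (neq _ _ exy) (neq _ _ eyz) (neq _ _ exz) => /eqP nxy /eqP nyz /eqP nxz.
  by move=> [|[|[|i]]] [|[|[|j]]] //= _ _; rewrite /c /= => xy; congruence.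
- by case=> [|[|]].
Qed.

End Cycles.

Section Detours.
Variables (T : finType) (e : rel T) (B : {set T}) (v : T).

Definition walk_in (w : nat -> T) (k : nat) : Prop :=
  (forall i, i <= k -> w i \in B) /\ (forall i, i < k -> e (w i) (w i.+1)).

Definition detour (w : nat -> T) (k : nat) : Prop :=
  walk_in w k /\ [&& e v (w 0), e v (w k), w 0 != w k & ~~ e (w 0) (w k)].

Lemma walk_in_prefix w k i : walk_in w k -> i <= k -> walk_in w i.
Proof. by case=> wB wE ik; split=> t ti; [apply: wB | apply: wE]; lia. Qed.

Lemma walk_in_suffix w k i :
  walk_in w k -> i <= k -> walk_in (fun t => w (t + i)) (k - i).
Proof.
case=> wB wE ik; split=> t ti; first by apply: wB; lia.
by rewrite addSn; apply: wE; lia.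
Qed.

Lemma detour_shortcut w k i d :
  detour w k -> i + d < k -> e (w i) (w (i + d).+1) ->
  detour (fun t => if t <= i then w t else w (t + d)) (k - d).
Proof.
case=> [[wB wE] ends] idk ed; split; last first.
  have -> : (k - d <= i) = false by lia.
  by rewrite leq0n subnK //; lia.
split=> t tk; first by case: ifP => _; apply: wB; lia.
rewrite /=; case: (ltngtP t i) => [ti|ti|->]; last by rewrite addSn.
- by apply: wE; lia.
- by rewrite addSn; apply: wE; lia.
Qed.

Section Shortest.
Variables (w : nat -> T) (k : nat).
Hypotheses (w_detour : detour w k) (w_shortest : forall k' w', k' < k -> ~ detour w' k').

Lemma shortest_detour_uniq i j : i < j <= k -> w i != w j.
Proof.
case/andP=> ij jk; apply/eqP => wij; have [[_ wE] ends] := w_detour.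
have [jk'|jk'] : j = k \/ j < k by lia.
  case: (w_shortest (k' := i) (w' := w)); first lia.
  by split; [apply: walk_in_prefix (proj1 w_detour) _; lia | rewrite wij jk'].
apply: (w_shortest _ (detour_shortcut (i := i) (d := j - i) w_detour _ _)).
- lia.
- lia.
- have -> : i + (j - i) = j by lia.
  by rewrite wij; apply: wE.
Qed.

Lemma shortest_detour_chordless i j : i.+1 < j <= k -> ~~ e (w i) (w j).
Proof.
case/andP=> ij jk; apply/negP => eij.
apply: (w_shortest _ (detour_shortcut (i := i) (d := j - i.+1) w_detour _ _)).
- lia.
- lia.
- by have -> : (i + (j - i.+1)).+1 = j by lia.
Qed.

End Shortest.
End Detours.

Section BlockGraphs.
Variables (T : finType) (e : rel T).
Hypotheses (e_sym : symmetric e) (e_irr : irreflexive e).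
Hypotheses (e_chordal : chordal e) (e_diamond : diamond_free e).

Lemma no_detour (B : {set T}) (v : T) : v \notin B -> forall k w, ~ detour e B v w k.
Proof.
move=> vB; elim/ltn_ind => k IH w w_detour.
have shortest k' w' : k' < k -> ~ detour e B v w' k' by move/IH.
have w_uniq := shortest_detour_uniq w_detour shortest.
have w_chordless := shortest_detour_chordless w_detour shortest.
have [[wB wE] /and4P [ev0 evk n0k ne0k]] := w_detour.
case: (boolP [exists t : 'I_k, (0 < t) && e v (w t)]).
  case/existsP => [[t tk]] /= /andP [t0 evt].
  have e0t : e (w 0) (w t).
    apply/negPn/negP => ne; apply: (shortest t w tk).
    split; first by apply: walk_in_prefix (proj1 w_detour) _; lia.
    by rewrite ev0 evt ne w_uniq // t0 (ltnW tk).
  have etk : e (w t) (w k).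
    apply/negPn/negP => ne; apply: (shortest (k - t) (fun s => w (s + t))); first lia.
    split; first by apply: walk_in_suffix (proj1 w_detour) _; lia.
    by rewrite /= add0n (subnK (ltnW tk)) evt evk ne w_uniq // tk leqnn.
  have t1 : t = 1.
    suff : ~~ (1 < t) by lia.
    by apply: contraL e0t => lt1; apply: w_chordless; rewrite lt1 ltnW.
  have k2 : k = 2.
    suff : ~~ (t.+1 < k) by lia.
    by apply: contraL etk => ltk; apply: w_chordless; rewrite ltk leqnn.
  subst t k; apply: (negP ne0k).
  by apply: (e_diamond (a := v) (b := w 1)); rewrite // e_sym.
rewrite negb_exists => /forallP no_inner.
have v_nbr t : e v (w t) -> t <= k -> (t == 0) || (t == k).
  move=> + tk; apply: contraTT => /norP [t0 tk'].
  by have := no_inner (Ordinal (_ : t < k)); rewrite /= lt0n t0; apply; lia.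
have w_inj i j : i <= k -> j <= k -> w i = w j -> i = j.
  move=> ik jk wij; case: (ltngtP i j) => // [ij|ji].
  - by move: (w_uniq i j); rewrite ij jk wij eqxx => /(_ isT).
  - by move: (w_uniq j i); rewrite ji ik wij eqxx => /(_ isT).
have w_adj i j : e (w i) (w j) -> i <= k -> j <= k -> i = j.+1 \/ j = i.+1.
  move=> eij ik jk.
  have : ~~ (i.+1 < j) by apply: contraL eij => ij; apply: w_chordless; rewrite ij.
  have : ~~ (j.+1 < i).
    by apply: contraL eij => ji; rewrite e_sym; apply: w_chordless; rewrite ji.
  have : i != j by apply: contraTneq eij => ->; rewrite e_irr.
  lia.
have k0 : 0 < k by rewrite lt0n; apply: contra n0k => /eqP ->.
pose c t := if t == 0 then v else w t.-1.
have cycle_c : induced_cycle e [set c (nat_of_ord i) | i : 'I_k.+2].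
  apply: induced_cycle_image => //.
  - move=> [|i] [|j] im jm; rewrite /c //=.
    + by move=> vw; move: vB; rewrite vw wB.
    + by move=> wv; move: vB; rewrite -wv wB.
    + by move/w_inj => -> //.
  - by move=> [|i] im; rewrite /c //=; apply: wE.
  - by rewrite /c /= e_sym.
  - move=> [|i] [|j] im jm; rewrite /c /=.
    + by rewrite e_irr.
    + by move/v_nbr => /(_ jm); lia.
    + by rewrite e_sym => /v_nbr /(_ im); lia.
    + by move/w_adj => /(_ im jm); lia.
case/negP: ne0k; apply: (e_chordal cycle_c (x := c 1) (y := c k.+1)).
- by apply/imsetP; exists (@Ordinal k.+2 1 isT).
- by apply/imsetP; exists (@Ordinal k.+2 k.+1 (ltnSn _)).
- by rewrite /c /=.
Qed.

Lemma block_graph_nbr_clique (B : {set T}) (v : T) :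
  induced_connected e B -> v \notin B -> clique e [set a in B | e v a].
Proof.
move=> [_ B_conn] vB a b; rewrite !inE => /andP [aB eva] /andP [bB evb] ab.
apply/negPn/negP => nab.
case/connectP: (B_conn a b aB bB) => p /(pathP a) p_edges p_last.
apply: (no_detour vB (k := size p) (w := fun i => nth a (a :: p) i)).
split; last by rewrite /= -last_nth -p_last eva evb ab nab.
by split=> [[|i] ip //=|i ip]; have /and3P [] := p_edges i ip.
Qed.

End BlockGraphs.

Section Treelike.
Variables (n : nat) (T : finType) (e : rel T) (F : {set {set T}}).
Hypotheses (e_sym : symmetric e) (e_irr : irreflexive e).
Hypothesis F_cover : forall x : T, exists2 K, K \in F & x \in K.
Hypothesis F_clique : forall K, K \in F -> #|K| = n /\ clique e K.
Hypothesis F_edge : forall x y, e x y -> exists2 K, K \in F & (x \in K) && (y \in K).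
Hypothesis F_meet :
  forall K1 K2, K1 \in F -> K2 \in F -> K1 != K2 -> #|K1 :&: K2| <= 1.
Hypothesis F_cycle : forall C, induced_cycle e C -> exists2 K, K \in F & C \subset K.

Lemma component_eq K1 K2 x y :
  K1 \in F -> K2 \in F -> x != y -> x \in K1 -> y \in K1 -> x \in K2 -> y \in K2 ->
  K1 = K2.
Proof.
move=> K1F K2F xy xK1 yK1 xK2 yK2; apply/eqP; apply/negPn/negP => /(F_meet K1F K2F).
have : [set x; y] \subset K1 :&: K2 by rewrite subUset !sub1set !inE xK1 yK1 xK2 yK2.
by move/subset_leq_card; rewrite cards2 xy => /leq_trans/[apply].
Qed.

Lemma triangle_sub_component x y z :
  e x y -> e y z -> e x z -> exists2 K, K \in F & [&& x \in K, y \in K & z \in K].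
Proof.
move=> exy eyz exz; have [C /F_cycle [K KF CK] [xC yC zC]] :=
  triangle_induced_cycle e_sym e_irr exy eyz exz.
by exists K => //; rewrite !(subsetP CK).
Qed.

Lemma clique_sub_component (Q : {set T}) x :
  clique e Q -> x \in Q -> exists2 K, K \in F & Q \subset K.
Proof.
move=> Q_clique xQ; case: (boolP (Q \subset [set x])) => [Qx|].
  by have [K KF xK] := F_cover x; exists K => //; apply: subset_trans Qx _; rewrite sub1set.
case/subsetPn => y yQ; rewrite inE => yx.
have exy : e x y by apply: Q_clique; rewrite // eq_sym.
have [K KF /andP [xK yK]] := F_edge exy; exists K => //.
apply/subsetP => z zQ; case: (eqVneq z x) => [-> //|zx]; case: (eqVneq z y) => [-> //|zy].
have eyz : e y z by apply: Q_clique; rewrite // eq_sym.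
have exz : e x z by apply: Q_clique; rewrite // eq_sym.
have [K' K'F /and3P [xK' yK' zK']] := triangle_sub_component exy eyz exz.
by rewrite (component_eq KF K'F (_ : x != y) xK yK xK' yK') // eq_sym.
Qed.

Lemma treelike_chordal : chordal e.
Proof.
move=> C /F_cycle [K KF CK] x y xC yC.
by apply: (F_clique KF).2; apply: (subsetP CK).
Qed.

Lemma treelike_diamond_free : diamond_free e.
Proof.
move=> a b c d eab eac ebc ead ebd cd.
have ab : a != b by apply: contraTneq eab => ->; rewrite e_irr.
have [K KF /and3P [aK bK cK]] := triangle_sub_component eab ebc eac.
have [K' K'F /and3P [aK' bK' dK']] := triangle_sub_component eab ebd ead.
move: dK'; rewrite -(component_eq KF K'F ab aK bK aK' bK') => dK.
exact: (F_clique KF).2.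
Qed.

Lemma treelike_extension_vertex (B : {set T}) (h : T -> T) v b :
  induced_connected e B -> hom_on e B h -> b \in B -> v \notin B -> e v b ->
  exists y, forall a, a \in B -> e v a -> e y (h a).
Proof.
move=> B_conn h_hom bB vB evb.
set N := [set a in B | e v a].
have N_clique : clique e N :=
  block_graph_nbr_clique e_sym e_irr treelike_chordal treelike_diamond_free B_conn vB.
have bN : b \in N by rewrite inE bB evb.
have N_small : #|N| < n.
  have vN_clique : clique e (v |: N).
    move=> x y; rewrite !in_setU1 => /predU1P [-> | xN] /predU1P [-> | yN] xy.
    - by rewrite eqxx in xy.
    - by move: yN; rewrite inE => /andP [].
    - by move: xN; rewrite inE e_sym => /andP [].
    - exact: N_clique.
  have [K KF vNK] := clique_sub_component vN_clique (setU11 v N).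
  have vN : v \notin N by rewrite inE (negbTE vB).
  by have := subset_leq_card vNK; rewrite cardsU1 vN (F_clique KF).1.
have hN_clique : clique e (h @: N).
  move=> _ _ /imsetP [a1 a1N ->] /imsetP [a2 a2N ->] ne.
  move: (a1N) (a2N); rewrite !inE => /andP [a1B _] /andP [a2B _].
  by apply: h_hom => //; apply: N_clique => //; apply: contraNneq ne => ->.
have [K KF hNK] := clique_sub_component hN_clique (imset_f h bN).
have [K_card K_clique] := F_clique KF.
have /subsetPn [y yK yhN] : ~~ (K \subset h @: N).
  apply/negP => /subset_leq_card; rewrite K_card.
  by have := leq_imset_card h N; lia.
exists y => a aB eva; have haN : h a \in h @: N by apply: imset_f; rewrite inE aB eva.
apply: K_clique => //; first exact: (subsetP hNK).
by apply: contraNneq yhN => ->.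
Qed.

End Treelike.

Lemma path_exit (T : finType) (r : rel T) (B : {set T}) x p :
  path r x p -> x \in B -> last x p \notin B ->
  exists y z, [/\ y \in B, z \notin B & r y z].
Proof.
elim: p x => [|z p IH] x /=; first by move=> _ ->.
case/andP => rxz pz xB lz; case: (boolP (z \in B)) => zB; first exact: IH pz zB lz.
by exists x, z.
Qed.

Section VertexExtension.
Variables (T : finType) (e : rel T).
Hypotheses (e_sym : symmetric e) (e_irr : irreflexive e) (e_conn : graph_connected e).

Lemma boundary_edge (B : {set T}) :
  B != set0 -> B != setT -> exists v b, [/\ b \in B, v \notin B & e v b].
Proof.
case/set0Pn => b0 b0B; rewrite eqEsubset subsetT /= => /subsetPn [u _ uB].
case/connectP: (e_conn.2 b0 u (in_setT _) (in_setT _)) => p p_path p_last.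
have e_path : path e b0 p by apply: sub_path p_path => x y /and3P [].
have := path_exit e_path b0B; rewrite -p_last => /(_ uB) [y [z [yB zB eyz]]].
by exists z, y; rewrite e_sym.
Qed.

Lemma induced_connected_setU1 (B : {set T}) v b :
  induced_connected e B -> b \in B -> e v b -> induced_connected e (v |: B).
Proof.
move=> [_ B_conn] bB evb; split; first by apply/set0Pn; exists v; rewrite setU11.
have B_sub x y : connect (induced_rel e B) x y -> connect (induced_rel e (v |: B)) x y.
  apply: connect_sub => x1 y1 /and3P [x1B y1B exy]; apply: connect1.
  by rewrite /induced_rel /= !in_setU1 x1B y1B exy !orbT.
have via_b x : x \in v |: B ->
    connect (induced_rel e (v |: B)) x b /\ connect (induced_rel e (v |: B)) b x.
  case/setU1P => [-> | xB]; last by split; apply: B_sub; apply: B_conn.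
  by split; apply: connect1; rewrite /induced_rel /= setU11 in_setU1 bB ?evb ?orbT // e_sym.
by move=> x y /via_b [xb _] /via_b [_ b_y]; apply: connect_trans xb b_y.
Qed.

Lemma hom_on_setU1 (B : {set T}) (h : T -> T) v y :
  v \notin B -> hom_on e B h -> (forall a, a \in B -> e v a -> e y (h a)) ->
  hom_on e (v |: B) (fun x => if x == v then y else h x).
Proof.
move=> vB h_hom y_adj x z.
have neq_v a : a \in B -> (a == v) = false by move=> aB; apply: contraNF vB => /eqP <-.
case/setU1P => [-> | xB] /setU1P [-> | zB] exz; rewrite ?eqxx.
- by rewrite e_irr in exz.
- by rewrite (neq_v _ zB); apply: y_adj.
- by rewrite (neq_v _ xB) e_sym; apply: y_adj; rewrite // e_sym.
- by rewrite (neq_v _ xB) (neq_v _ zB); apply: h_hom.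
Qed.

Hypothesis e_extend : forall (B : {set T}) (h : T -> T) v b,
  induced_connected e B -> hom_on e B h -> b \in B -> v \notin B -> e v b ->
  exists y, forall a, a \in B -> e v a -> e y (h a).

Lemma hom_on_extend (B : {set T}) (h : T -> T) :
  induced_connected e B -> hom_on e B h ->
  exists g, graph_hom e g /\ {in B, forall x, g x = h x}.
Proof.
move Em : #|~: B| => m; elim/ltn_ind: m B h Em => m IH B h Em B_conn h_hom.
have [BT | BT] := eqVneq B setT.
  by exists h; split=> // x y; apply: h_hom; rewrite BT inE.
have [v [b [bB vB evb]]] := boundary_edge B_conn.1 BT.
have [y y_adj] := e_extend B_conn h_hom bB vB evb.
have [|g [g_hom g_ext]] := IH _ _ (v |: B) _ erefl
  (induced_connected_setU1 B_conn bB evb) (hom_on_setU1 vB h_hom y_adj).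
  by rewrite -Em; apply: proper_card; rewrite properC properUr // sub1set.
exists g; split=> // x xB; rewrite g_ext ?in_setU1 ?xB ?orbT //.
by rewrite ifN //; apply: contraNneq vB => <-.
Qed.

End VertexExtension.

Theorem lemma5p1 (n : nat) (T : finType) (e : rel T) :
  2 <= n -> Kn_treelike n e -> C_HH e.
Proof.
move=> _ [[e_sym e_irr] [e_conn [F [F_cover [F_clique [F_edge [F_meet F_cycle]]]]]]].
move=> A f; apply: hom_on_extend => // B h v b.
exact: (treelike_extension_vertex e_sym e_irr F_cover F_clique F_edge F_meet F_cycle).
Qed.
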